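(* For every $\tau\in\mathbb{R}$ and every constant $C$ with $0<C<1/\log 4$, there exists $N_0=N_0(C,\tau)$ such that for all integers $N\ge N_0$, \[ \mathfrak{m}_N(\tau) < \exp\!\left(-C(\log N)^2\right). \]
   Context: For a positive integer $N$ let $\mathcal{S}_N:=\left\{\sum_{n=1}^N \frac{s_n}{n} : s_1,\dots,s_N\in\{-1,+1\}\right\}$, and for $\tau\in\mathbb{R}$ let $\mathfrak{m}_N(\tau):=\min\{|\mathfrak{s}-\tau| : \mathfrak{s}\in\mathcal{S}_N\}$. *)

From Stdlib Require Import Reals List.
Open Scope R_scope.

Fixpoint sign_vectors (N : nat) : list (list R) :=
  match N with
  | O => nil :: nil
  | S n => flat_map (fun v => (v ++ (1 :: nil)) :: (v ++ (-1 :: nil)) :: nil)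
                    (sign_vectors n)
  end.

Fixpoint signed_harmonic_aux (k : nat) (s : list R) : R :=
  match s with
  | nil => 0
  | x :: t => x / INR k + signed_harmonic_aux (S k) t
  end.
Definition signed_harmonic (s : list R) : R := signed_harmonic_aux 1 s.

(* The finite list enumerating S_N (with repetitions). *)
Definition S_list (N : nat) : list R := map signed_harmonic (sign_vectors N).

Definition m_N (N : nat) (tau : R) : R :=
  match S_list N with
  | nil => 0
  | x :: l => fold_left (fun acc y => Rmin acc (Rabs (y - tau))) l (Rabs (x - tau))
  end.

(* The signed harmonic sum over a Thue-Morse block of length [2^k] starting at [n] is an
   iterated difference of [1/x] with steps [1, 2, ..., 2^(k-1)], of order [c_k n^-(k+1)].
   For a parameter [K] the indices up to [N] are split into an alternating prefix, runs of
   Thue-Morse blocks of orders [K, K-1, ..., 1], and single terms. Choosing the signs greedily,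
   from the single terms (whose harmonic sum exceeds [|tau| + 1]) down to the blocks of order
   [K], approximates [tau] as long as every block is at most the total of the smaller ones, and
   the run lengths are chosen so that this holds. The final error is the size of an order-[K]
   block, [2^(-K^2/2 + O(K log K))], while [N] is only [2^K] times a polynomial in [K]: since
   [ln N ~ K ln 2], the error is [exp (-(ln N)^2 / ln 4 + o((ln N)^2))]. *)

From Stdlib Require Import Reals Lra Lia List.
From Coquelicot Require Import Coquelicot.
Open Scope R_scope.

Lemma Rdiv_pow_le_contravar c a b e : 0 <= c -> 0 < a -> a <= b -> c / b ^ e <= c / a ^ e.
Proof.
  intros Hc Ha Hab. apply Rmult_le_compat_l; [exact Hc|].
  apply Rinv_le_contravar; [apply pow_lt; lra | apply pow_incr; lra].
Qed.

Lemma Rdiv_le_cross a b c d : 0 < b -> 0 < d -> a * d <= c * b -> a / b <= c / d.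
Proof.
  intros Hb Hd H. apply Rmult_le_reg_r with (b * d); [nra|].
  replace (a / b * (b * d)) with (a * d) by (field; lra).
  replace (c / d * (b * d)) with (c * b) by (field; lra). exact H.
Qed.

Lemma INR_pow2 k : INR (2 ^ k) = 2 ^ k.
Proof. rewrite pow_INR. reflexivity. Qed.

Lemma INR_div_bounds a b : (0 < b)%nat ->
  INR a / INR b - 1 < INR (a / b) <= INR a / INR b.
Proof.
  intros Hb.
  assert (Hdiv := Nat.div_mod_eq a b). assert (Hmod := Nat.mod_upper_bound a b ltac:(lia)).
  assert (Hb' : 0 < INR b) by (apply lt_0_INR; exact Hb).
  apply (f_equal INR) in Hdiv. rewrite plus_INR, mult_INR in Hdiv.
  apply lt_INR in Hmod. assert (Hmod0 := pos_INR (a mod b)).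
  rewrite Hdiv. split.
  - apply Rmult_lt_reg_r with (INR b); [exact Hb'|].
    replace ((_ / INR b - 1) * INR b) with (INR b * INR (a / b) + INR (a mod b) - INR b)
      by (field; lra). nra.
  - apply Rmult_le_reg_r with (INR b); [exact Hb'|].
    replace (_ / INR b * INR b) with (INR b * INR (a / b) + INR (a mod b)) by (field; lra). nra.
Qed.

Lemma ln_succ_sub_le x : 0 < x -> ln (x + 1) - ln x <= / x.
Proof.
  intros Hx.
  rewrite <- ln_div by lra.
  replace ((x + 1) / x) with (1 + / x) by (field; lra).
  apply Rle_trans with (ln (exp (/ x))); [|rewrite ln_exp; lra].
  apply ln_le; [pose proof (Rinv_0_lt_compat x Hx); lra | apply exp_ineq1_le].
Qed.

Lemma ln_le_two_sqrt x : 0 < x -> ln x <= 2 * sqrt x.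
Proof.
  intros Hx. set (s := sqrt x).
  assert (Hs : 0 < s) by (apply sqrt_lt_R0, Hx).
  rewrite <- (sqrt_sqrt x) by lra. fold s. rewrite ln_mult by lra.
  pose proof (exp_ineq1_le (ln s)). rewrite exp_ln in * by lra. lra.
Qed.

Lemma quartic_eventually_pos e c3 c2 c1 c0 : 0 < e ->
  exists s0, forall s, s0 <= s -> 0 < e * s ^ 4 + c3 * s ^ 3 + c2 * s ^ 2 + c1 * s + c0.
Proof.
  intros He.
  set (M := Rabs c3 + Rabs c2 + Rabs c1 + Rabs c0).
  assert (HM : 0 <= M) by (unfold M; pose proof (Rabs_pos c3); pose proof (Rabs_pos c2);
                          pose proof (Rabs_pos c1); pose proof (Rabs_pos c0); lra).
  exists (1 + M / e). intros s Hs.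
  assert (HMe : 0 <= M / e) by (apply Rdiv_le_0_compat; lra).
  assert (Hs1 : 1 <= s) by lra.
  assert (Hes : M < e * s).
  { apply Rlt_le_trans with (e * (1 + M / e)); [|apply Rmult_le_compat_l; lra].
    replace (e * (1 + M / e)) with (e + M) by (field; lra). lra. }
  assert (Hs2 : s <= s ^ 2) by (simpl; nra).
  assert (Hs3 : s ^ 2 <= s ^ 3) by (simpl; nra).
  assert (Hc3 : - (Rabs c3 * s ^ 3) <= c3 * s ^ 3)
    by (pose proof (Rle_abs (- c3)); rewrite Rabs_Ropp in *;
        assert (0 <= s ^ 3) by (apply pow_le; lra); nra).
  assert (Hc2 : - (Rabs c2 * s ^ 3) <= c2 * s ^ 2)
    by (pose proof (Rle_abs (- c2)); rewrite Rabs_Ropp in *; pose proof (Rabs_pos c2); nra).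
  assert (Hc1 : - (Rabs c1 * s ^ 3) <= c1 * s)
    by (pose proof (Rle_abs (- c1)); rewrite Rabs_Ropp in *; pose proof (Rabs_pos c1); nra).
  assert (Hc0 : - (Rabs c0 * s ^ 3) <= c0)
    by (pose proof (Rle_abs (- c0)); rewrite Rabs_Ropp in *; pose proof (Rabs_pos c0); nra).
  assert (Hlead : M * s ^ 3 < e * s ^ 4).
  { replace (e * s ^ 4) with ((e * s) * s ^ 3) by ring.
    apply Rmult_lt_compat_r; [apply pow_lt; lra | exact Hes]. }
  unfold M in Hlead. lra.
Qed.

Lemma exists_bracket (f : nat -> nat) : (forall K, (f K < f (S K))%nat) ->
  forall K0 N, (f K0 <= N)%nat -> exists K, (K0 <= K)%nat /\ (f K <= N < f (S K))%nat.
Proof.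
  intros Hf K0 N. induction N as [|N IH]; intros HN.
  - exists K0. specialize (Hf K0). lia.
  - destruct (Nat.le_gt_cases (f K0) N) as [HK0 | HK0].
    + destruct (IH HK0) as [K [HK [Hlo Hhi]]].
      destruct (Nat.lt_ge_cases (S N) (f (S K))) as [Hlt | Hge].
      * exists K. lia.
      * exists (S K). specialize (Hf (S K)). lia.
    + exists K0. specialize (Hf K0). lia.
Qed.

(** * Iterated differences of x^-p *)

Fixpoint diff_inv_pow (k p : nat) (x : R) : R :=
  match k with
  | O => / x ^ p
  | S k' => diff_inv_pow k' p x - diff_inv_pow k' p (x + 2 ^ k')
  end.

(* [diff_coef k p = 2^(k(k-1)/2) p (p+1) ... (p+k-1)]: the steps times the exponents met when
   differentiating [k] times. *)
Fixpoint diff_coef (k p : nat) : R :=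
  match k with
  | O => 1
  | S k' => 2 ^ k' * INR p * diff_coef k' (S p)
  end.

Lemma is_derive_diff_inv_pow k p x : 0 < x ->
  is_derive (diff_inv_pow k p) x (- INR p * diff_inv_pow k (S p) x).
Proof.
  revert p x; induction k as [|k IH]; intros p x Hx; simpl.
  - assert (Hxp : x ^ p <> 0) by (apply pow_nonzero; lra).
    auto_derive; [exact Hxp|].
    destruct p as [|p]; simpl; [field; lra|].
    field; split; [apply pow_nonzero|]; lra.
  - assert (Hshift : is_derive (fun y => diff_inv_pow k p (y + 2 ^ k)) x
                       (- INR p * diff_inv_pow k (S p) (x + 2 ^ k))).
    { assert (H := is_derive_comp (diff_inv_pow k p) (fun y => y + 2 ^ k) x _ _
                     (IH p (x + 2 ^ k) ltac:(pose proof (pow_lt 2 k); lra))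
                     ltac:(auto_derive; auto)).
      rewrite Rmult_1_l in H; exact H. }
    assert (H := is_derive_minus _ _ _ _ _ (IH p x Hx) Hshift).
    unfold minus, plus, opp in H; simpl in H.
    replace (- INR p * _) with (- INR p * diff_inv_pow k (S p) x
                               + - (- INR p * diff_inv_pow k (S p) (x + 2 ^ k))) by ring.
    exact H.
Qed.

Lemma diff_coef_nonneg k p : 0 <= diff_coef k p.
Proof.
  revert p; induction k as [|k IH]; intros p; simpl; [lra|].
  apply Rmult_le_pos; [apply Rmult_le_pos|]; auto using pow_le, pos_INR with real.
Qed.

Lemma diff_coef_pos k p : (1 <= p)%nat -> 0 < diff_coef k p.
Proof.
  revert p; induction k as [|k IH]; intros p Hp; simpl; [lra|].
  repeat apply Rmult_lt_0_compat; auto with arith.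
  - apply pow_lt; lra.
  - apply lt_0_INR; lia.
Qed.

(* By the mean value theorem, [diff_inv_pow (S k) p x = p 2^k diff_inv_pow k (S p) xi]
   for some [xi] in [(x, x + 2^k)]. *)
Lemma diff_inv_pow_bounds k p x : 0 < x ->
  diff_coef k p / (x + 2 ^ k - 1) ^ (p + k) <= diff_inv_pow k p x <= diff_coef k p / x ^ (p + k).
Proof.
  revert p x; induction k as [|k IH]; intros p x Hx.
  - simpl. rewrite Nat.add_0_r. replace (x + 1 - 1) with x by ring. lra.
  - assert (Hk : 1 <= 2 ^ k) by (apply pow_R1_Rle; lra).
    destruct (MVT_gen (diff_inv_pow k p) x (x + 2 ^ k)
                (fun y => - INR p * diff_inv_pow k (S p) y)) as [xi [Hxi Hmvt]].
    + intros y Hy. rewrite Rmin_left in Hy by lra. apply is_derive_diff_inv_pow. lra.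
    + intros y Hy. rewrite Rmin_left in Hy by lra.
      apply continuity_pt_filterlim, (ex_derive_continuous (diff_inv_pow k p)).
      eexists. apply is_derive_diff_inv_pow. lra.
    + rewrite Rmin_left in Hxi by lra. rewrite Rmax_right in Hxi by lra.
      assert (Hmvt' : diff_inv_pow (S k) p x = INR p * 2 ^ k * diff_inv_pow k (S p) xi).
      { simpl. replace (x + 2 ^ k - x) with (2 ^ k) in Hmvt by ring. lra. }
      rewrite Hmvt', (Nat.add_succ_r p k).
      replace (diff_coef (S k) p) with (INR p * 2 ^ k * diff_coef k (S p)) by (simpl; ring).
      destruct (IH (S p) xi ltac:(lra)) as [Hlo Hhi].
      assert (Hc := diff_coef_nonneg k (S p)).
      assert (Hpk : 0 <= INR p * 2 ^ k) by (apply Rmult_le_pos; [apply pos_INR | lra]).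
      assert (Hlo' : diff_coef k (S p) / (x + 2 ^ S k - 1) ^ (S p + k) <= diff_inv_pow k (S p) xi).
      { eapply Rle_trans; [|exact Hlo].
        apply Rdiv_pow_le_contravar; [exact Hc | lra | simpl; lra]. }
      assert (Hhi' : diff_inv_pow k (S p) xi <= diff_coef k (S p) / x ^ (S p + k)).
      { eapply Rle_trans; [exact Hhi|].
        apply Rdiv_pow_le_contravar; [exact Hc | lra | lra]. }
      unfold Rdiv. rewrite !(Rmult_assoc (INR p * 2 ^ k)).
      split; apply Rmult_le_compat_l; assumption.
Qed.

Lemma diff_inv_pow_pos k p x : (1 <= p)%nat -> 0 < x -> 0 < diff_inv_pow k p x.
Proof.
  intros Hp Hx. destruct (diff_inv_pow_bounds k p x Hx) as [Hlo _].
  eapply Rlt_le_trans; [|exact Hlo].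
  assert (1 <= 2 ^ k) by (apply pow_R1_Rle; lra).
  apply Rdiv_lt_0_compat; [apply diff_coef_pos; exact Hp | apply pow_lt; lra].
Qed.

Lemma diff_inv_pow_le k p x y : 0 < y -> y <= x ->
  diff_inv_pow k p x <= diff_coef k p / y ^ (p + k).
Proof.
  intros Hy Hyx. destruct (diff_inv_pow_bounds k p x ltac:(lra)) as [_ Hhi].
  eapply Rle_trans; [exact Hhi|].
  apply Rdiv_pow_le_contravar; [apply diff_coef_nonneg | exact Hy | exact Hyx].
Qed.

Lemma diff_inv_pow_succ_le k p x : (1 <= p)%nat -> 0 < x ->
  diff_inv_pow (S k) p x <= diff_inv_pow k p x.
Proof.
  intros Hp Hx. simpl diff_inv_pow at 1.
  assert (0 < diff_inv_pow k p (x + 2 ^ k))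
    by (apply diff_inv_pow_pos; [exact Hp | pose proof (pow_lt 2 k); lra]).
  lra.
Qed.

Lemma diff_coef_shift k p : INR p * diff_coef k (S p) = INR (p + k) * diff_coef k p.
Proof.
  revert p; induction k as [|k IH]; intros p; cbn [diff_coef].
  - rewrite Nat.add_0_r. ring.
  - transitivity (2 ^ k * INR p * (INR (S p) * diff_coef k (S (S p)))); [ring|].
    rewrite IH, <- Nat.add_succ_comm. ring.
Qed.

Lemma diff_coef_S k p : diff_coef (S k) p = 2 ^ k * INR (p + k) * diff_coef k p.
Proof. cbn [diff_coef]. rewrite Rmult_assoc, diff_coef_shift. ring. Qed.

Lemma diff_coef_sqr_le k p :
  diff_coef k p ^ 2 <= 2 ^ (k * (k - 1)) * INR (p + k) ^ (2 * k).
Proof.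
  induction k as [|k IH]; [simpl; lra|].
  rewrite diff_coef_S.
  replace (S k * (S k - 1))%nat with (2 * k + k * (k - 1))%nat by (destruct k; simpl; nia).
  replace (2 * S k)%nat with (2 + 2 * k)%nat by lia.
  rewrite !pow_add.
  replace (2 ^ (2 * k)) with ((2 ^ k) ^ 2) by (rewrite <- pow_mult; f_equal; lia).
  assert (Hpk : 0 <= INR (p + k) <= INR (p + S k)) by (split; [apply pos_INR | apply le_INR; lia]).
  assert (Hpow : 0 <= INR (p + k) ^ (2 * k) <= INR (p + S k) ^ (2 * k))
    by (split; [apply pow_le | apply pow_incr]; lra).
  assert (H2k : 0 <= 2 ^ (k * (k - 1))) by (apply pow_le; lra).
  assert (H2 : 0 <= (2 ^ k) ^ 2) by (apply pow_le, pow_le; lra).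
  apply Rle_trans
    with ((2 ^ k) ^ 2 * (INR (p + k) ^ 2 * (2 ^ (k * (k - 1)) * INR (p + k) ^ (2 * k)))).
  - replace ((2 ^ k * INR (p + k) * diff_coef k p) ^ 2)
      with ((2 ^ k) ^ 2 * (INR (p + k) ^ 2 * diff_coef k p ^ 2)) by ring.
    apply Rmult_le_compat_l; [exact H2|].
    apply Rmult_le_compat_l; [apply pow_le; lra | exact IH].
  - replace ((2 ^ k) ^ 2 * 2 ^ (k * (k - 1)) * (INR (p + S k) ^ 2 * INR (p + S k) ^ (2 * k)))
      with ((2 ^ k) ^ 2 * (INR (p + S k) ^ 2 * (2 ^ (k * (k - 1)) * INR (p + S k) ^ (2 * k))))
      by ring.
    apply Rmult_le_compat_l; [exact H2|].
    apply Rmult_le_compat; [apply pow_le; lra | nra | apply pow_incr; lra | ].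
    apply Rmult_le_compat_l; lra.
Qed.

(** * Signed harmonic sums *)

Definition sign_list (l : list R) : Prop := List.Forall (fun x => x = 1 \/ x = -1) l.

Lemma sign_list_opp l : sign_list l -> sign_list (map Ropp l).
Proof.
  intros Hl. apply Forall_map. eapply Forall_impl; [|exact Hl].
  intros x [-> | ->]; [right | left]; ring.
Qed.

Lemma signed_harmonic_aux_app l1 l2 n :
  signed_harmonic_aux n (l1 ++ l2)
  = signed_harmonic_aux n l1 + signed_harmonic_aux (n + length l1) l2.
Proof.
  revert n; induction l1 as [|x l1 IH]; intros n; simpl.
  - rewrite Nat.add_0_r. ring.
  - rewrite IH, Nat.add_succ_comm. ring.
Qed.

Lemma signed_harmonic_aux_opp l n :
  signed_harmonic_aux n (map Ropp l) = - signed_harmonic_aux n l.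
Proof.
  revert n; induction l as [|x l IH]; intros n; simpl; [ring|].
  rewrite IH. unfold Rdiv. ring.
Qed.

Fixpoint thue_morse (k : nat) : list R :=
  match k with
  | O => 1 :: nil
  | S k' => thue_morse k' ++ map Ropp (thue_morse k')
  end.

Lemma thue_morse_length k : length (thue_morse k) = (2 ^ k)%nat.
Proof.
  induction k as [|k IH]; simpl; [reflexivity|].
  rewrite length_app, length_map, IH. lia.
Qed.

Lemma thue_morse_sign_list k : sign_list (thue_morse k).
Proof.
  induction k as [|k IH]; simpl.
  - constructor; [left; reflexivity | constructor].
  - apply (proj2 (Forall_app _ _ _)). split; [exact IH | apply sign_list_opp, IH].
Qed.

Lemma signed_harmonic_aux_thue_morse k n :
  signed_harmonic_aux n (thue_morse k) = diff_inv_pow k 1 (INR n).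
Proof.
  revert n; induction k as [|k IH]; intros n; simpl thue_morse.
  - cbn [signed_harmonic_aux diff_inv_pow pow]. rewrite Rmult_1_r. unfold Rdiv. ring.
  - rewrite signed_harmonic_aux_app, signed_harmonic_aux_opp, !IH, thue_morse_length.
    rewrite plus_INR, INR_pow2. reflexivity.
Qed.

Fixpoint alternating (L : nat) : list R :=
  match L with
  | O => nil
  | S L' => 1 :: map Ropp (alternating L')
  end.

Lemma alternating_length L : length (alternating L) = L.
Proof. induction L as [|L IH]; simpl; [|rewrite length_map, IH]; reflexivity. Qed.

Lemma alternating_sign_list L : sign_list (alternating L).
Proof.
  induction L as [|L IH]; simpl; constructor; [left; reflexivity | apply sign_list_opp, IH].
Qed.

Lemma signed_harmonic_aux_alternating L n : (1 <= n)%nat ->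
  0 <= signed_harmonic_aux n (alternating L) <= / INR n.
Proof.
  revert n; induction L as [|L IH]; intros n Hn;
    assert (Hn0 : 0 < INR n) by (apply lt_0_INR; lia).
  - simpl. split; [lra | left; apply Rinv_0_lt_compat, Hn0].
  - cbn [alternating signed_harmonic_aux]. rewrite signed_harmonic_aux_opp.
    destruct (IH (S n) ltac:(lia)) as [Hlo Hhi]. rewrite S_INR in Hhi.
    assert (/ (INR n + 1) <= / INR n) by (apply Rinv_le_contravar; lra).
    unfold Rdiv. lra.
Qed.

Lemma in_sign_vectors l : sign_list l -> In l (sign_vectors (length l)).
Proof.
  induction l as [|x l IH] using rev_ind; intros Hl; [left; reflexivity|].
  apply Forall_app in Hl as [Hl Hx]. inversion Hx as [|? ? Hx1 _]; subst.
  rewrite length_app, Nat.add_1_r. simpl sign_vectors.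
  apply in_flat_map. exists l. split; [exact (IH Hl)|].
  destruct Hx1 as [-> | ->]; simpl; auto.
Qed.

Lemma fold_left_Rmin_le (f : R -> R) l a :
  fold_left (fun acc y => Rmin acc (f y)) l a <= a /\
  forall y, In y l -> fold_left (fun acc y => Rmin acc (f y)) l a <= f y.
Proof.
  revert a; induction l as [|b l IH]; intros a; simpl.
  - split; [lra | tauto].
  - destruct (IH (Rmin a (f b))) as [H1 H2]. split.
    + eapply Rle_trans; [exact H1 | apply Rmin_l].
    + intros y [<- | Hy]; [eapply Rle_trans; [exact H1 | apply Rmin_r] | auto].
Qed.

Lemma m_N_le N tau l : In l (sign_vectors N) -> m_N N tau <= Rabs (signed_harmonic l - tau).
Proof.
  intros Hl. unfold m_N.
  assert (Hin : In (signed_harmonic l) (S_list N)) by (apply in_map; exact Hl).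
  destruct (S_list N) as [|x r]; [destruct Hin|].
  destruct (fold_left_Rmin_le (fun y => Rabs (y - tau)) r (Rabs (x - tau))) as [H1 H2].
  destruct Hin as [<- | Hin]; [exact H1 | apply H2, Hin].
Qed.

(** * Approximation by signed block sums *)

Definition sign_net (n L : nat) (A d : R) : Prop :=
  forall t, Rabs t <= A + d ->
  exists q, length q = L /\ sign_list q /\ Rabs (t - signed_harmonic_aux n q) <= d.

Lemma sign_net_nil n d : sign_net n 0 0 d.
Proof.
  intros t Ht. exists nil. split; [reflexivity | split; [constructor|]].
  simpl. rewrite Rminus_0_r. lra.
Qed.

Lemma sign_net_weaken n L A A' d : A' <= A -> sign_net n L A d -> sign_net n L A' d.
Proof. intros HA Hnet t Ht. apply Hnet. lra. Qed.

(* Greedy step: choose the sign of the block [p] according to the sign of the target. *)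
Lemma sign_net_cons p n L A d : sign_list p ->
  0 <= signed_harmonic_aux n p <= A + d -> sign_net (n + length p) L A d ->
  sign_net n (length p + L) (signed_harmonic_aux n p + A) d.
Proof.
  intros Hp [Ha0 Ha] Hnet t Ht.
  set (a := signed_harmonic_aux n p) in *.
  set (p' := if Rle_dec 0 t then p else map Ropp p).
  assert (Hp' : sign_list p' /\ length p' = length p
                /\ Rabs (t - signed_harmonic_aux n p') <= A + d).
  { unfold p'; destruct (Rle_dec 0 t) as [Ht0 | Ht0].
    - fold a. split; [exact Hp | split; [reflexivity|]].
      rewrite Rabs_pos_eq in Ht by lra. unfold Rabs; destruct Rcase_abs; lra.
    - rewrite signed_harmonic_aux_opp, length_map. fold a.
      split; [apply sign_list_opp, Hp | split; [reflexivity|]].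
      rewrite Rabs_left in Ht by lra. unfold Rabs; destruct Rcase_abs; lra. }
  destruct Hp' as [Hsp' [Hlen' Hres]].
  destruct (Hnet _ Hres) as [q [Hlen [Hq Hd]]].
  exists (p' ++ q). split; [|split].
  - rewrite length_app, Hlen, Hlen'. reflexivity.
  - apply Forall_app. split; assumption.
  - rewrite signed_harmonic_aux_app, Hlen'.
    replace (t - _) with (t - signed_harmonic_aux n p' - signed_harmonic_aux (n + length p) q)
      by ring.
    exact Hd.
Qed.

(* The later segment brings the target within [A1 + d] of zero, the earlier one finishes the job. *)
Lemma sign_net_app n L1 L2 A1 A2 d :
  sign_net (n + L1) L2 A2 (A1 + d) -> sign_net n L1 A1 d -> sign_net n (L1 + L2) (A2 + A1) d.
Proof.
  intros Hnet2 Hnet1 t Ht.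
  destruct (Hnet2 t ltac:(lra)) as [q2 [Hlen2 [Hq2 Hd2]]].
  destruct (Hnet1 _ Hd2) as [q1 [Hlen1 [Hq1 Hd1]]].
  exists (q1 ++ q2). split; [|split].
  - rewrite length_app. lia.
  - apply Forall_app. split; assumption.
  - rewrite signed_harmonic_aux_app, Hlen1.
    replace (t - _) with (t - signed_harmonic_aux (n + L1) q2 - signed_harmonic_aux n q1) by ring.
    exact Hd1.
Qed.

(* The value of [m] consecutive Thue-Morse blocks of order [k] starting at index [n]. *)
Fixpoint block_sum (k n m : nat) : R :=
  match m with
  | O => 0
  | S m' => diff_inv_pow k 1 (INR n) + block_sum k (n + 2 ^ k) m'
  end.

Lemma block_sum_nonneg k n m : (1 <= n)%nat -> 0 <= block_sum k n m.
Proof.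
  revert n; induction m as [|m IH]; intros n Hn; simpl; [lra|].
  assert (0 < diff_inv_pow k 1 (INR n)) by (apply diff_inv_pow_pos; [lia | apply lt_0_INR; lia]).
  assert (0 <= block_sum k (n + 2 ^ k) m) by (apply IH; lia).
  lra.
Qed.

Lemma block_sum_ge k n m b :
  (forall i, (i < m)%nat -> b <= diff_inv_pow k 1 (INR (n + i * 2 ^ k))) ->
  INR m * b <= block_sum k n m.
Proof.
  revert n; induction m as [|m IH]; intros n Hb; simpl block_sum; [simpl; lra|].
  rewrite S_INR.
  assert (H0 := Hb O ltac:(lia)). rewrite Nat.mul_0_l, Nat.add_0_r in H0.
  assert (Hrest : INR m * b <= block_sum k (n + 2 ^ k) m).
  { apply IH. intros i Hi. replace (n + 2 ^ k + i * 2 ^ k)%nat with (n + S i * 2 ^ k)%nat by lia.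
    apply Hb. lia. }
  lra.
Qed.

Lemma block_sum_harmonic_ge n m : (1 <= n)%nat ->
  ln (INR (n + m)) - ln (INR n) <= block_sum 0 n m.
Proof.
  revert n; induction m as [|m IH]; intros n Hn; simpl block_sum.
  - rewrite Nat.add_0_r. lra.
  - assert (H := IH (n + 1)%nat ltac:(lia)).
    replace (n + 1 + m)%nat with (n + S m)%nat in H by lia. rewrite (plus_INR n 1) in H.
    assert (Hstep := ln_succ_sub_le (INR n) ltac:(apply lt_0_INR; lia)).
    simpl (2 ^ 0)%nat. simpl diff_inv_pow. rewrite Rmult_1_r. simpl (INR 1) in H.
    lra.
Qed.

(* [m + 1] consecutive Thue-Morse blocks of order [k] starting at [n]: consecutive block
   values differ by values of [diff_inv_pow (S k) 1], so each block value is at most the sum of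
   the later ones plus [e]. *)
Lemma sign_net_blocks k n m e : (1 <= n)%nat ->
  (forall j, (n <= j)%nat -> diff_inv_pow (S k) 1 (INR j) <= e) ->
  diff_inv_pow k 1 (INR (n + m * 2 ^ k)) <= e ->
  sign_net n (S m * 2 ^ k) (block_sum k n (S m)) e.
Proof.
  revert n; induction m as [|m IH]; intros n Hn Hdiff Hlast.
  - rewrite Nat.mul_0_l, Nat.add_0_r in Hlast.
    assert (Hnet := sign_net_cons (thue_morse k) n 0 0 e (thue_morse_sign_list k)).
    rewrite signed_harmonic_aux_thue_morse, thue_morse_length, Nat.add_0_r in Hnet.
    simpl block_sum. rewrite Nat.mul_1_l.
    apply Hnet; [|apply sign_net_nil].
    split; [left; apply diff_inv_pow_pos; [lia | apply lt_0_INR; lia] | lra].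
  - assert (Hnet := sign_net_cons (thue_morse k) n (S m * 2 ^ k) (block_sum k (n + 2 ^ k) (S m)) e
                      (thue_morse_sign_list k)).
    rewrite signed_harmonic_aux_thue_morse, thue_morse_length in Hnet.
    replace (S (S m) * 2 ^ k)%nat with (2 ^ k + S m * 2 ^ k)%nat by lia.
    change (block_sum k n (S (S m)))
      with (diff_inv_pow k 1 (INR n) + block_sum k (n + 2 ^ k) (S m)).
    apply Hnet.
    + assert (Hstep : diff_inv_pow k 1 (INR n)
                      = diff_inv_pow k 1 (INR (n + 2 ^ k)) + diff_inv_pow (S k) 1 (INR n))
        by (cbn [diff_inv_pow]; rewrite plus_INR, INR_pow2; ring).
      assert (Hrest : 0 <= block_sum k (n + 2 ^ k + 2 ^ k) m)
        by (apply block_sum_nonneg; lia).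
      assert (Hd := Hdiff n (le_n n)).
      split; [left; apply diff_inv_pow_pos; [lia | apply lt_0_INR; lia]|].
      simpl block_sum. lra.
    + apply IH; [lia | intros j Hj; apply Hdiff; lia |].
      replace (n + 2 ^ k + m * 2 ^ k)%nat with (n + S m * 2 ^ k)%nat by lia. exact Hlast.
Qed.

(** * The levels of the construction *)

(* For the parameter [K], level [S j] ([j < K]) occupies the indices
   [[level_start K (S j), level_start K j)] with [level_count K j] Thue-Morse blocks of order
   [S j]; level [0] consists of the single indices from [level_start K 0] to [N], and the indices
   below [level_start K K] get alternating signs. [level_mass K j] is a lower bound for the value
   of level [S j], and [precision K] an upper bound for the blocks of order [K]. *)
Definition rising3 (k : nat) : nat := ((k + 1) * (k + 2) * (k + 3))%nat.

Definition scale (K : nat) : nat := ((2 * K + 4) * rising3 K)%nat.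

Definition weight (K k : nat) : nat := (scale K / rising3 k)%nat.

Definition weightR (K k : nat) : R := INR (scale K) / INR (rising3 k).

Definition level_start (K k : nat) : nat := (2 ^ K * weight K k)%nat.

Definition level_count (K j : nat) : nat := (2 ^ (K - S j) * (weight K j - weight K (S j)))%nat.

Definition level_mass (K j : nat) : R :=
  INR (level_count K j) * diff_coef (S j) 1 / INR (level_start K j) ^ (1 + S j).

Definition precision (K : nat) : R := diff_coef K 1 / INR (level_start K K) ^ (1 + K).

Lemma rising3_pos k : (0 < rising3 k)%nat.
Proof. unfold rising3. nia. Qed.

Lemma rising3_INR k : INR (rising3 k) = (INR k + 1) * (INR k + 2) * (INR k + 3).
Proof.
  unfold rising3. rewrite !mult_INR, !plus_INR. simpl (INR 1); simpl (INR 2); simpl (INR 3). ring.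
Qed.

Lemma weight_bounds K k : weightR K k - 1 < INR (weight K k) <= weightR K k.
Proof. apply INR_div_bounds, rising3_pos. Qed.

Lemma weightR_ge K k : (k <= K)%nat -> 2 * INR K + 4 <= weightR K k.
Proof.
  intros Hk. unfold weightR, scale.
  assert (H1 : 0 < INR (rising3 k)) by (apply lt_0_INR, rising3_pos).
  assert (H2 : INR (rising3 k) <= INR (rising3 K))
    by (apply le_INR; unfold rising3; apply Nat.mul_le_mono; [apply Nat.mul_le_mono|]; lia).
  assert (H3 : INR (2 * K + 4) = 2 * INR K + 4)
    by (rewrite plus_INR, mult_INR; simpl (INR 2); simpl (INR 4); ring).
  rewrite mult_INR, H3.
  apply Rmult_le_reg_r with (INR (rising3 k)); [exact H1|].
  field_simplify; [|lra]. pose proof (pos_INR K). nra.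
Qed.

Lemma weightR_succ K j : weightR K j * (INR j + 1) = weightR K (S j) * (INR j + 4).
Proof.
  unfold weightR. rewrite !rising3_INR, S_INR.
  pose proof (pos_INR j). field. repeat split; lra.
Qed.

Lemma weight_gt K k : (k <= K)%nat -> 2 * INR K + 3 < INR (weight K k).
Proof. intros Hk. pose proof (weight_bounds K k). pose proof (weightR_ge K k Hk). lra. Qed.

Lemma weight_lt_pred K j : (S j <= K)%nat -> (weight K (S j) < weight K j)%nat.
Proof.
  intros Hj. apply INR_lt.
  destruct (weight_bounds K j) as [Hj1 _]. destruct (weight_bounds K (S j)) as [_ Hj2].
  assert (Hge := weightR_ge K (S j) Hj).
  assert (Hrec := weightR_succ K j).
  assert (HjK : INR (S j) <= INR K) by (apply le_INR, Hj). rewrite S_INR in HjK.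
  assert (H0 := pos_INR j).
  assert (Hgap : weightR K (S j) + 6 <= weightR K j).
  { apply Rmult_le_reg_r with (INR j + 1); [lra|]. rewrite Hrec. nra. }
  lra.
Qed.

Lemma level_count_ge1 K j : (S j <= K)%nat -> (1 <= level_count K j)%nat.
Proof.
  intros Hj. unfold level_count.
  assert (Hlt := weight_lt_pred K j Hj).
  assert (H2 : (1 <= 2 ^ (K - S j))%nat)
    by (apply Nat.le_succ_l, Nat.neq_0_lt_0, Nat.pow_nonzero; lia).
  nia.
Qed.

Lemma level_count_mul K j : (S j <= K)%nat ->
  (level_count K j * 2 ^ S j = 2 ^ K * (weight K j - weight K (S j)))%nat.
Proof.
  intros Hj. unfold level_count.
  replace (2 ^ K)%nat with (2 ^ (K - S j) * 2 ^ S j)%nat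
    by (rewrite <- Nat.pow_add_r; f_equal; lia).
  ring.
Qed.

Lemma level_start_succ K j : (S j <= K)%nat ->
  (level_start K (S j) + level_count K j * 2 ^ S j = level_start K j)%nat.
Proof.
  intros Hj. rewrite level_count_mul by exact Hj. unfold level_start.
  assert (Hlt := weight_lt_pred K j Hj). nia.
Qed.

Lemma level_start_INR K k : INR (level_start K k) = 2 ^ K * INR (weight K k).
Proof. unfold level_start. rewrite mult_INR, INR_pow2. reflexivity. Qed.

Lemma level_count_INR K j : (S j <= K)%nat ->
  INR (level_count K j) * 2 ^ S j = 2 ^ K * (INR (weight K j) - INR (weight K (S j))).
Proof.
  intros Hj. rewrite <- INR_pow2, <- mult_INR, level_count_mul by exact Hj.
  rewrite mult_INR, INR_pow2, minus_INR; [reflexivity|].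
  apply Nat.lt_le_incl, weight_lt_pred, Hj.
Qed.

Lemma level_start_pos K k : (k <= K)%nat -> (1 <= level_start K k)%nat.
Proof.
  intros Hk. assert (H1 := weight_gt K k Hk).
  assert (Hw : (1 <= weight K k)%nat).
  { apply INR_le. simpl (INR 1). pose proof (pos_INR K). lra. }
  unfold level_start.
  assert (1 <= 2 ^ K)%nat by (apply Nat.le_succ_l, Nat.neq_0_lt_0, Nat.pow_nonzero; lia). nia.
Qed.

Lemma level_start_INR_pos K k : (k <= K)%nat -> 0 < INR (level_start K k).
Proof. intros Hk. apply lt_0_INR. pose proof (level_start_pos K k Hk). lia. Qed.

Lemma level_start_last_le K k : (k <= K)%nat -> (level_start K K <= level_start K k)%nat.
Proof.
  intros Hk. unfold level_start, weight. apply Nat.mul_le_mono_l, Nat.div_le_compat_l.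
  split; [apply rising3_pos|]. unfold rising3. apply Nat.mul_le_mono; [apply Nat.mul_le_mono|]; lia.
Qed.

Lemma level_start0_le K : (level_start K 0 <= 2 ^ K * scale K)%nat.
Proof.
  apply Nat.mul_le_mono_l, Nat.Div0.div_le_upper_bound. unfold rising3. lia.
Qed.

Lemma precision_pos K : 0 < precision K.
Proof.
  apply Rdiv_lt_0_compat; [apply diff_coef_pos; lia | apply pow_lt, level_start_INR_pos; lia].
Qed.

Lemma level_mass_nonneg K j : (j <= K)%nat -> 0 <= level_mass K j.
Proof.
  intros HjK. apply Rdiv_le_0_compat.
  - apply Rmult_le_pos; [apply pos_INR | apply diff_coef_nonneg].
  - apply pow_lt, level_start_INR_pos, HjK.
Qed.

(* By Bernoulli, [(c - 1)^(k+1) >= f^(k+1) (1 + 2/k)^(k+1) >= f^(k+1) (1 + 2(k+1)/k)]. *)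
Lemma pow_le_gap_mul_pow k a b c f : (1 <= k)%nat -> 0 <= a <= f ->
  2 * f / (INR k + 4) <= a - b -> f * (INR k + 2) / INR k <= c - 1 ->
  a ^ (k + 2) <= (a - b) * (INR k + 1) / 2 * (c - 1) ^ (k + 1).
Proof.
  intros Hk Ha Hab Hc.
  set (x := INR k) in *.
  assert (Hx : 1 <= x) by (apply (le_INR 1 k) in Hk; exact Hk).
  assert (Hf : 0 <= f) by lra.
  assert (Hfk : 0 <= f ^ (k + 1)) by (apply pow_le, Hf).
  set (r := (x + 1) / (x + 4)). set (B := 1 + (x + 1) * (2 / x)).
  assert (Hr : 0 <= r) by (unfold r; apply Rdiv_le_0_compat; lra).
  assert (HB : 0 <= B) by (unfold B; assert (0 < 2 / x) by (apply Rdiv_lt_0_compat; lra); nra).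
  assert (Hbern : f ^ (k + 1) * B <= (c - 1) ^ (k + 1)).
  { apply Rle_trans with (f ^ (k + 1) * (1 + 2 / x) ^ (k + 1)).
    - apply Rmult_le_compat_l; [exact Hfk|].
      unfold B. replace (x + 1) with (INR (k + 1)) by (rewrite plus_INR; reflexivity).
      apply Rle_pow_lin. apply Rdiv_le_0_compat; lra.
    - rewrite <- Rpow_mult_distr. apply pow_incr. split.
      + apply Rmult_le_pos; [exact Hf|]. assert (0 < 2 / x) by (apply Rdiv_lt_0_compat; lra). lra.
      + replace (f * (1 + 2 / x)) with (f * (x + 2) / x) by (field; lra). exact Hc. }
  assert (Hgap : f * r <= (a - b) * (x + 1) / 2).
  { unfold r. apply Rmult_le_reg_r with (2 / (x + 1)); [apply Rdiv_lt_0_compat; lra|].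
    replace (f * ((x + 1) / (x + 4)) * (2 / (x + 1))) with (2 * f / (x + 4)) by (field; lra).
    replace ((a - b) * (x + 1) / 2 * (2 / (x + 1))) with (a - b) by (field; lra). exact Hab. }
  assert (HrB : 1 <= r * B).
  { unfold r, B. apply Rmult_le_reg_r with (x * (x + 4)); [nra|].
    replace ((x + 1) / (x + 4) * (1 + (x + 1) * (2 / x)) * (x * (x + 4)))
      with ((x + 1) * (3 * x + 2)) by (field; lra).
    nra. }
  apply Rle_trans with (f * f ^ (k + 1)).
  { replace (k + 2)%nat with (S (k + 1)) by lia. change (f * f ^ (k + 1)) with (f ^ S (k + 1)).
    apply pow_incr. exact Ha. }
  apply Rle_trans with ((f * r) * (f ^ (k + 1) * B)).
  { replace (f * r * (f ^ (k + 1) * B)) with (f * f ^ (k + 1) * (r * B)) by ring.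
    rewrite <- (Rmult_1_r (f * f ^ (k + 1))) at 1.
    apply Rmult_le_compat_l; [apply Rmult_le_pos; assumption | exact HrB]. }
  apply Rmult_le_compat; [apply Rmult_le_pos; assumption | apply Rmult_le_pos; assumption
                         | exact Hgap | exact Hbern].
Qed.

(* The weights are proportional to [1 / ((k+1)(k+2)(k+3))] to make this inequality hold. *)
Lemma weight_pow_le K j : (S (S j) <= K)%nat ->
  INR (weight K (S j)) ^ (S j + 2)
  <= (INR (weight K (S j)) - INR (weight K (S (S j)))) * (INR (S j) + 1) / 2
     * (INR (weight K j) - 1) ^ (S j + 1).
Proof.
  intros HjK.
  set (f := weightR K (S j)).
  destruct (weight_bounds K (S j)) as [Ha1 Ha2].
  destruct (weight_bounds K (S (S j))) as [_ Hb2].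
  destruct (weight_bounds K j) as [Hc1 _].
  assert (Hf := weightR_ge K (S j) ltac:(lia)). fold f in Hf, Ha1, Ha2.
  assert (HK : INR (S (S j)) <= INR K) by (apply le_INR, HjK). rewrite !S_INR in HK.
  assert (Hj0 := pos_INR j).
  assert (Hrec1 := weightR_succ K j). fold f in Hrec1.
  assert (Hrec2 := weightR_succ K (S j)). fold f in Hrec2. rewrite S_INR in Hrec2.
  apply (pow_le_gap_mul_pow _ _ _ _ f); [lia | split; [apply pos_INR | exact Ha2] | |];
    rewrite S_INR.
  - apply Rmult_le_reg_r with (INR j + 1 + 4); [lra|].
    replace (2 * f / (INR j + 1 + 4) * (INR j + 1 + 4)) with (2 * f) by (field; lra).
    nra.
  - apply Rmult_le_reg_r with (INR j + 1); [lra|].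
    replace (f * (INR j + 1 + 2) / (INR j + 1) * (INR j + 1)) with (f * (INR j + 3))
      by (field; lra).
    nra.
Qed.

Lemma level_mass_eq K k : (S k <= K)%nat ->
  level_mass K k = 2 ^ K * (INR (weight K k) - INR (weight K (S k))) / 2 * (INR k + 1)
                   * diff_coef k 1 / (2 ^ K * INR (weight K k)) ^ (k + 2).
Proof.
  intros Hk. unfold level_mass.
  rewrite diff_coef_S, level_start_INR, <- level_count_INR by exact Hk.
  replace (1 + S k)%nat with (k + 2)%nat by lia.
  rewrite plus_INR. simpl (INR 1). simpl pow.
  assert (Hw := weight_gt K k ltac:(lia)). assert (HK := pos_INR K).
  field. apply pow_nonzero, Rgt_not_eq, Rmult_lt_0_compat; [apply pow_lt|]; lra.
Qed.

Lemma last_block_le_level_mass K j : (S (S j) <= K)%nat ->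
  diff_inv_pow (S j) 1 (INR (level_start K j - 2 ^ S j)) <= level_mass K (S j).
Proof.
  intros HjK.
  rewrite level_mass_eq by exact HjK.
  set (k := S j). set (G := 2 ^ K).
  set (a := INR (weight K k)). set (b := INR (weight K (S k))). set (c := INR (weight K j)).
  assert (HG : 0 < G) by (apply pow_lt; lra).
  assert (HkG : 2 ^ k <= G) by (apply Rle_pow; [lra | unfold k; lia]).
  assert (Hc : 2 * INR K + 3 < c) by (apply weight_gt; lia).
  assert (Ha : 2 * INR K + 3 < a) by (apply weight_gt; unfold k; lia).
  assert (HK := pos_INR K).
  assert (Hlast : INR (level_start K j - 2 ^ k) = G * c - 2 ^ k).
  { assert (Hstep := level_start_succ K j ltac:(lia)).
    assert (Hcount := level_count_ge1 K j ltac:(lia)).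
    rewrite minus_INR by (fold k in Hstep; nia).
    rewrite level_start_INR, INR_pow2. reflexivity. }
  assert (Hc1 : 0 < G * (c - 1)) by (apply Rmult_lt_0_compat; lra).
  assert (Hcc := diff_coef_nonneg k 1).
  apply Rle_trans with (diff_coef k 1 / (G * (c - 1)) ^ (1 + k)).
  { apply diff_inv_pow_le; [exact Hc1 | rewrite Hlast; nra]. }
  apply Rdiv_le_cross; [apply pow_lt; exact Hc1 | apply pow_lt, Rmult_lt_0_compat; lra|].
  assert (Hkey := weight_pow_le K j HjK). fold k a b c in Hkey. clearbody k G a b c.
  replace (1 + k)%nat with (k + 1)%nat by lia.
  rewrite !Rpow_mult_distr.
  replace (G ^ (k + 2)) with (G * G ^ (k + 1))
    by (replace (k + 2)%nat with (S (k + 1)) by lia; reflexivity).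
  replace (G * (a - b) / 2 * (INR k + 1) * diff_coef k 1 * (G ^ (k + 1) * (c - 1) ^ (k + 1)))
    with (diff_coef k 1 * (G * G ^ (k + 1)) * ((a - b) * (INR k + 1) / 2 * (c - 1) ^ (k + 1)))
    by field.
  rewrite <- Rmult_assoc.
  apply Rmult_le_compat_l; [|exact Hkey].
  apply Rmult_le_pos; [exact Hcc|]. apply Rmult_le_pos; [lra | apply pow_le; lra].
Qed.

Lemma inv_le_level_mass0 K N : (1 <= K)%nat -> (2 ^ K * scale K <= N)%nat ->
  / INR N <= level_mass K 0.
Proof.
  intros HK HN.
  rewrite level_mass_eq by exact HK.
  set (G := 2 ^ K). set (f := weightR K 0).
  set (a := INR (weight K 0)). set (b := INR (weight K 1)).
  assert (HG : 0 < G) by (apply pow_lt; lra).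
  destruct (weight_bounds K 0) as [Ha1 Ha2]. fold a f in Ha1, Ha2.
  destruct (weight_bounds K 1) as [_ Hb2]. fold b in Hb2.
  assert (Hrec := weightR_succ K 0). fold f in Hrec. simpl (INR 0) in Hrec.
  assert (Hf := weightR_ge K 0 ltac:(lia)). fold f in Hf.
  assert (HK0 := pos_INR K).
  assert (HNf : G * (6 * f) <= INR N).
  { apply le_INR in HN. rewrite mult_INR, INR_pow2 in HN. fold G in HN.
    replace (6 * f) with (INR (scale K)) by (unfold f, weightR; simpl; field). exact HN. }
  assert (HN0 : 0 < INR N) by nra.
  simpl (INR 0). simpl diff_coef. simpl pow.
  replace (/ INR N) with (1 / INR N) by (unfold Rdiv; ring).
  rewrite Rplus_0_l, !Rmult_1_r.
  assert (HGa : 0 < G * a) by (apply Rmult_lt_0_compat; lra).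
  apply Rdiv_le_cross; [exact HN0 | apply Rmult_lt_0_compat; exact HGa |].
  assert (Hgap : f / 2 <= a - b) by lra.
  assert (H1 : G * a * (G * a) <= G * f * (G * f)) by (apply Rmult_le_compat; nra).
  assert (H2 : G * f * (G * f) <= G * (f / 2) / 2 * INR N).
  { assert (HGf : 0 <= G * f / 4) by (apply Rdiv_le_0_compat; nra).
    apply Rmult_le_compat_l with (r := G * f / 4) in HNf; [|exact HGf].
    nra. }
  assert (H3 : G * (f / 2) / 2 * INR N <= G * (a - b) / 2 * INR N)
    by (apply Rmult_le_compat_r; [lra | unfold Rdiv; nra]).
  nra.
Qed.

Lemma diff_inv_pow_le_level_mass K j x : (S j <= K)%nat -> (level_start K j <= x)%nat ->
  diff_inv_pow (S j) 1 (INR x) <= level_mass K j.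
Proof.
  intros HjK Hx.
  assert (HB := level_start_INR_pos K j ltac:(lia)).
  apply Rle_trans with (diff_coef (S j) 1 / INR (level_start K j) ^ (1 + S j)).
  { apply diff_inv_pow_le; [exact HB | apply le_INR, Hx]. }
  unfold level_mass, Rdiv. rewrite Rmult_assoc.
  rewrite <- (Rmult_1_l (diff_coef (S j) 1 * _)) at 1.
  apply Rmult_le_compat_r.
  - apply Rmult_le_pos; [apply diff_coef_nonneg | apply Rlt_le, Rinv_0_lt_compat, pow_lt, HB].
  - apply (le_INR 1), level_count_ge1, HjK.
Qed.

Lemma level_mass_le_block_sum K j : (S j <= K)%nat ->
  level_mass K j <= block_sum (S j) (level_start K (S j)) (level_count K j).
Proof.
  intros HjK. unfold level_mass, Rdiv. rewrite Rmult_assoc. apply block_sum_ge.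
  intros i Hi.
  assert (Hstep := level_start_succ K j HjK).
  set (x := INR (level_start K (S j) + i * 2 ^ S j)).
  assert (Hx : 0 < x).
  { unfold x. apply lt_0_INR. pose proof (level_start_pos K (S j) HjK). lia. }
  assert (Hxj : x + 2 ^ S j - 1 <= INR (level_start K j)).
  { assert (Hle : (level_start K (S j) + i * 2 ^ S j + 2 ^ S j <= level_start K j)%nat) by nia.
    apply le_INR in Hle. rewrite plus_INR, INR_pow2 in Hle. fold x in Hle. lra. }
  destruct (diff_inv_pow_bounds (S j) 1 x Hx) as [Hlo _].
  eapply Rle_trans; [|exact Hlo].
  apply Rdiv_pow_le_contravar; [apply diff_coef_nonneg | | exact Hxj].
  assert (1 <= 2 ^ S j) by (apply pow_R1_Rle; lra). lra.
Qed.

Lemma sign_net_level K j e : (S j <= K)%nat ->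
  (forall x, (level_start K (S j) <= x)%nat -> diff_inv_pow (S (S j)) 1 (INR x) <= e) ->
  diff_inv_pow (S j) 1 (INR (level_start K j - 2 ^ S j)) <= e ->
  sign_net (level_start K (S j)) (level_start K j - level_start K (S j)) (level_mass K j) e.
Proof.
  intros HjK Hdiff Hlast.
  assert (Hcount := level_count_ge1 K j HjK).
  assert (Hstep := level_start_succ K j HjK).
  replace (level_start K j - 2 ^ S j)%nat
    with (level_start K (S j) + (level_count K j - 1) * 2 ^ S j)%nat in Hlast by nia.
  assert (Hnet := sign_net_blocks (S j) (level_start K (S j)) (level_count K j - 1) e
                    (level_start_pos _ _ HjK) Hdiff Hlast).
  replace (S (level_count K j - 1) * 2 ^ S j)%nat
    with (level_start K j - level_start K (S j))%nat in Hnet by nia.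
  replace (S (level_count K j - 1)) with (level_count K j) in Hnet by lia.
  eapply sign_net_weaken; [apply level_mass_le_block_sum, HjK | exact Hnet].
Qed.

Lemma sign_net_levels K j : (S j <= K)%nat ->
  sign_net (level_start K K) (level_start K j - level_start K K) (level_mass K j) (precision K).
Proof.
  intros HjK. remember (K - S j)%nat as d eqn:Hd. revert j HjK Hd.
  induction d as [|d IH]; intros j HjK Hd.
  - assert (EK : K = S j) by lia. subst K.
    assert (HB := level_start_INR_pos (S j) (S j) (le_n _)).
    apply sign_net_level; [exact HjK | |].
    + intros x Hx. apply le_INR in Hx.
      eapply Rle_trans; [apply diff_inv_pow_succ_le; [lia | lra]|].
      apply diff_inv_pow_le; [exact HB | exact Hx].
    + apply diff_inv_pow_le; [exact HB | apply le_INR].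
      pose proof (level_start_succ (S j) j HjK). pose proof (level_count_ge1 (S j) j HjK). nia.
  - assert (HjK' : (S (S j) <= K)%nat) by lia.
    assert (Hprec := Rlt_le _ _ (precision_pos K)).
    assert (Hlevel : sign_net (level_start K K + (level_start K (S j) - level_start K K))
                       (level_start K j - level_start K (S j)) (level_mass K j)
                       (level_mass K (S j) + precision K)).
    { replace (level_start K K + (level_start K (S j) - level_start K K))%nat
        with (level_start K (S j)) by (pose proof (level_start_last_le K (S j) HjK); lia).
      apply sign_net_level; [exact HjK | |].
      - intros x Hx. assert (H := diff_inv_pow_le_level_mass K (S j) x HjK' Hx). lra.
      - assert (H := last_block_le_level_mass K j HjK'). lra. }
    assert (Hall := sign_net_app _ _ _ _ _ _ Hlevel (IH (S j) HjK' ltac:(lia))).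
    replace (level_start K (S j) - level_start K K + (level_start K j - level_start K (S j)))%nat
      with (level_start K j - level_start K K)%nat in Hall
      by (pose proof (level_start_last_le K (S j) HjK);
          pose proof (level_start_succ K j HjK); lia).
    eapply sign_net_weaken; [|exact Hall].
    assert (H := level_mass_nonneg K (S j) ltac:(lia)). lra.
Qed.

Lemma sign_net_tail K N : (1 <= K)%nat -> (2 ^ K * scale K <= N)%nat ->
  sign_net (level_start K K) (S N - level_start K K)
    (block_sum 0 (level_start K 0) (S N - level_start K 0) + level_mass K 0) (precision K).
Proof.
  intros HK HN.
  set (B0 := level_start K 0).
  assert (HB0N : (B0 <= N)%nat) by (eapply Nat.le_trans; [apply level_start0_le | exact HN]).
  assert (HB0 : (1 <= B0)%nat) by (apply level_start_pos; lia).
  assert (HKK : (level_start K K <= B0)%nat) by (apply level_start_last_le; lia).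
  assert (Hprec := Rlt_le _ _ (precision_pos K)).
  assert (Hlevel0 : sign_net (level_start K K + (B0 - level_start K K)) (S (N - B0) * 2 ^ 0)
                      (block_sum 0 B0 (S (N - B0))) (level_mass K 0 + precision K)).
  { replace (level_start K K + (B0 - level_start K K))%nat with B0 by lia.
    apply sign_net_blocks; [exact HB0 | |].
    - intros x Hx. assert (H := diff_inv_pow_le_level_mass K 0 x HK Hx). lra.
    - replace (B0 + (N - B0) * 2 ^ 0)%nat with N by (rewrite Nat.pow_0_r, Nat.mul_1_r; lia).
      simpl diff_inv_pow. rewrite Rmult_1_r.
      assert (H := inv_le_level_mass0 K N HK HN). lra. }
  assert (Hnet := sign_net_app _ _ _ _ _ _ Hlevel0 (sign_net_levels K 0 HK)).
  replace (B0 - level_start K K + S (N - B0) * 2 ^ 0)%nat with (S N - level_start K K)%nat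
    in Hnet by (rewrite Nat.pow_0_r, Nat.mul_1_r; lia).
  replace (S N - B0)%nat with (S (N - B0)) by lia. exact Hnet.
Qed.

(* The first [n - 1] signs alternate, contributing a value in [[0, 1]]. *)
Lemma m_N_le_of_sign_net N n A d tau : (1 <= n <= S N)%nat -> Rabs tau + 1 <= A + d ->
  sign_net n (S N - n) A d -> m_N N tau <= d.
Proof.
  intros Hn Htau Hnet.
  set (q0 := alternating (n - 1)).
  destruct (signed_harmonic_aux_alternating (n - 1) 1 (le_n 1)) as [Hv0 Hv1].
  fold q0 in Hv0, Hv1. simpl (INR 1) in Hv1. rewrite Rinv_1 in Hv1.
  set (v := signed_harmonic_aux 1 q0) in *.
  destruct (Hnet (tau - v)) as [q [Hlen [Hq Hd]]].
  { apply Rle_trans with (Rabs tau + 1); [|exact Htau].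
    unfold Rabs at 1. destruct (Rcase_abs (tau - v)); pose proof (Rle_abs tau);
      pose proof (Rle_abs (- tau)); rewrite Rabs_Ropp in *; lra. }
  assert (Hin := in_sign_vectors (q0 ++ q)
                   ltac:(apply Forall_app; split; [apply alternating_sign_list | exact Hq])).
  assert (Hlen0 : length q0 = (n - 1)%nat) by apply alternating_length.
  rewrite length_app, Hlen, Hlen0 in Hin.
  replace (n - 1 + (S N - n))%nat with N in Hin by lia.
  eapply Rle_trans; [exact (m_N_le N tau _ Hin)|].
  unfold signed_harmonic. rewrite signed_harmonic_aux_app, Hlen0. fold v.
  replace (1 + (n - 1))%nat with n by lia.
  rewrite <- Rabs_Ropp. replace (- _) with (tau - v - signed_harmonic_aux n q) by ring.
  exact Hd.
Qed.

Lemma m_N_le_precision tau K Lam N : (1 <= K)%nat -> exp (Rabs tau + 1) <= INR Lam ->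
  (Lam * (2 ^ K * scale K) <= N)%nat -> m_N N tau <= precision K.
Proof.
  intros HK HLam HN.
  assert (HLam1 : (1 <= Lam)%nat).
  { apply INR_le. simpl (INR 1). eapply Rle_trans; [|exact HLam].
    pose proof (exp_ineq1_le (Rabs tau + 1)). pose proof (Rabs_pos tau). lra. }
  set (B0 := level_start K 0).
  assert (HB0N : (Lam * B0 <= N)%nat).
  { eapply Nat.le_trans; [apply Nat.mul_le_mono_l, level_start0_le | exact HN]. }
  assert (HB0 : (1 <= B0)%nat) by (apply level_start_pos; lia).
  assert (Hnet := sign_net_tail K N HK ltac:(nia)).
  eapply (m_N_le_of_sign_net N (level_start K K)); [| |exact Hnet].
  { pose proof (level_start_pos K K (le_n K)). pose proof (level_start_last_le K 0 (Nat.le_0_l K)).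
    nia. }
  assert (Hharm := block_sum_harmonic_ge B0 (S N - B0) HB0).
  replace (B0 + (S N - B0))%nat with (S N) in Hharm by nia.
  assert (Htau : Rabs tau + 1 <= ln (INR Lam)).
  { rewrite <- (ln_exp (Rabs tau + 1)). apply ln_le; [apply exp_pos | exact HLam]. }
  assert (HLamB0 : ln (INR Lam) <= ln (INR (S N)) - ln (INR B0)).
  { assert (HB0R : 0 < INR B0) by (apply lt_0_INR; lia).
    rewrite <- ln_div by (try exact HB0R; apply lt_0_INR; lia).
    apply ln_le; [apply lt_0_INR; lia|].
    apply Rmult_le_reg_r with (INR B0); [exact HB0R|].
    unfold Rdiv. rewrite Rmult_assoc, Rinv_l, Rmult_1_r by lra.
    rewrite <- mult_INR. apply le_INR. lia. }
  assert (Hmass0 := level_mass_nonneg K 0 ltac:(lia)).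
  pose proof (precision_pos K). fold B0. lra.
Qed.

(** * Asymptotics *)

Lemma ln_precision_le K :
  ln (precision K) <= INR K * ln (INR K + 1) - (INR K * INR K + 3 * INR K) / 2 * ln 2.
Proof.
  assert (Hln2 : 0 < ln 2) by (rewrite <- ln_1; apply ln_increasing; lra).
  assert (HK := pos_INR K).
  assert (Hcc := diff_coef_pos K 1 (le_n 1)).
  assert (HB := level_start_INR_pos K K (le_n K)).
  assert (HBge : 2 ^ K <= INR (level_start K K)).
  { rewrite level_start_INR. pose proof (weight_gt K K (le_n K)).
    pose proof (pow_lt 2 K). nra. }
  assert (Hcoef : 2 * ln (diff_coef K 1)
                  <= INR K * (INR K - 1) * ln 2 + 2 * INR K * ln (INR K + 1)).
  { assert (H := diff_coef_sqr_le K 1).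
    apply ln_le in H; [|apply pow_lt, Hcc].
    rewrite ln_mult, !ln_pow in H by (try apply pow_lt; try apply lt_0_INR; lia || lra).
    replace (INR (K * (K - 1))) with (INR K * (INR K - 1)) in H
      by (destruct K; [simpl; ring | rewrite mult_INR, minus_INR by lia; simpl; ring]).
    rewrite (mult_INR 2 K), (plus_INR 1 K) in H. simpl (INR 1) in H. simpl (INR 2) in H.
    rewrite (Rplus_comm 1 (INR K)) in H. lra. }
  assert (HlnB : INR K * ln 2 <= ln (INR (level_start K K))).
  { rewrite <- ln_pow by lra. apply ln_le; [apply pow_lt; lra | exact HBge]. }
  unfold precision. rewrite ln_div, ln_pow by (try apply pow_lt; assumption).
  rewrite plus_INR. simpl (INR 1).
  assert (Hmul : (1 + INR K) * (INR K * ln 2) <= (1 + INR K) * ln (INR (level_start K K)))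
    by (apply Rmult_le_compat_l; lra).
  lra.
Qed.

Lemma scale_S_le K : INR (scale (S K)) <= 2 * (INR K + 4) ^ 4.
Proof.
  unfold scale. rewrite mult_INR, rising3_INR, plus_INR, mult_INR.
  replace (INR (S K)) with (INR K + 1) by (symmetry; apply S_INR).
  simpl (INR 2). simpl (INR 4). set (x := INR K). assert (Hx : 0 <= x) by apply pos_INR.
  replace ((1 + 1) * (x + 1) + (1 + 1 + 1 + 1)) with (2 * (x + 3)) by ring.
  replace ((x + 1 + 1) * (x + 1 + 2) * (x + 1 + 3)) with ((x + 2) * (x + 3) * (x + 4)) by ring.
  replace (2 * (x + 4) ^ 4) with (2 * (x + 4) * ((x + 4) * (x + 4) * (x + 4))) by ring.
  apply Rmult_le_compat; [lra | repeat apply Rmult_le_pos; lra | lra |].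
  apply Rmult_le_compat; [nra | lra | apply Rmult_le_compat; lra | lra].
Qed.

Lemma ln_le_of_lt_scale Lam K N : (1 <= N)%nat -> (N < Lam * (2 ^ S K * scale (S K)))%nat ->
  ln (INR N) <= ln (INR Lam) + (INR K + 2) * ln 2 + 4 * ln (INR K + 4).
Proof.
  intros HN HNK.
  assert (HNR : 0 < INR N) by (apply lt_0_INR; lia).
  assert (HLam : 0 < INR Lam) by (apply lt_0_INR; nia).
  assert (HK := pos_INR K).
  assert (H2 : 0 < 2 ^ (K + 2)) by (apply pow_lt; lra).
  assert (H4 : 0 < (INR K + 4) ^ 4) by (apply pow_lt; lra).
  assert (Hbound : INR N <= INR Lam * (2 ^ (K + 2) * (INR K + 4) ^ 4)).
  { apply Rle_trans with (INR (Lam * (2 ^ S K * scale (S K)))); [apply le_INR; lia|].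
    rewrite !mult_INR, INR_pow2. apply Rmult_le_compat_l; [lra|].
    replace (2 ^ (K + 2)) with (2 ^ S K * 2) by (rewrite pow_add; simpl; ring).
    rewrite Rmult_assoc. apply Rmult_le_compat_l; [apply pow_le; lra | apply scale_S_le]. }
  apply ln_le in Hbound; [|exact HNR].
  rewrite ln_mult in Hbound by (try apply Rmult_lt_0_compat; assumption).
  rewrite ln_mult in Hbound by assumption.
  rewrite !ln_pow in Hbound by lra.
  rewrite plus_INR in Hbound. simpl (INR 2) in Hbound. simpl (INR 4) in Hbound. lra.
Qed.

Lemma quartic_gap_eventually a C A : 0 < a -> C * a < 1 / 2 ->
  exists s0, forall s, s0 <= s ->
    C * (a * (s * s) + 8 * s + A) ^ 2 + (s * s - 4) * (2 * s)
    < ((s * s - 4) * (s * s - 4) + 3 * (s * s - 4)) / 2 * a.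
Proof.
  intros Ha HCa.
  destruct (quartic_eventually_pos (a / 2 - C * a * a) (- 16 * C * a - 2)
              (- 5 * a / 2 - 64 * C - 2 * C * a * A) (8 - 16 * C * A) (2 * a - C * A * A))
    as [s0 Hs0]; [nra|].
  exists s0. intros s Hs. specialize (Hs0 s Hs).
  assert (Hexpand : (a / 2 - C * a * a) * s ^ 4 + (- 16 * C * a - 2) * s ^ 3
                    + (- 5 * a / 2 - 64 * C - 2 * C * a * A) * s ^ 2 + (8 - 16 * C * A) * s
                    + (2 * a - C * A * A)
                    = ((s * s - 4) * (s * s - 4) + 3 * (s * s - 4)) / 2 * a
                      - C * (a * (s * s) + 8 * s + A) ^ 2 - (s * s - 4) * (2 * s))
    by field.
  lra.
Qed.

(* With [s = sqrt (K + 4)] and [ln x <= 2 sqrt x], both sides become polynomials in [s] whose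
   leading coefficients are [- ln 2 / 2] and [- C (ln 2)^2]; [C < 1 / ln 4] says the first wins. *)
Lemma log_gap_eventually C L : 0 < C -> C < 1 / ln 4 ->
  exists K1 : nat, forall K y, (K1 <= K)%nat ->
    0 <= y <= L + (INR K + 2) * ln 2 + 4 * ln (INR K + 4) ->
    INR K * ln (INR K + 1) - (INR K * INR K + 3 * INR K) / 2 * ln 2 < - C * y ^ 2.
Proof.
  intros HC HC4.
  set (a := ln 2).
  assert (Ha : 0 < a) by (unfold a; rewrite <- ln_1; apply ln_increasing; lra).
  assert (HCa : C * a < 1 / 2).
  { replace (ln 4) with (2 * a) in HC4
      by (unfold a; replace 4 with (2 * 2) by ring; rewrite ln_mult by lra; ring).
    apply Rmult_lt_compat_r with (r := 2 * a) in HC4; [|lra].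
    replace (1 / (2 * a) * (2 * a)) with 1 in HC4 by (field; lra). lra. }
  set (A := L - 2 * a).
  destruct (quartic_gap_eventually a C A Ha HCa) as [s0 Hs0].
  destruct (INR_unbounded (s0 * s0)) as [K1 HK1].
  exists K1. intros K y HK [Hy0 Hy].
  assert (HKR : INR K1 <= INR K) by (apply le_INR, HK).
  assert (HK0 := pos_INR K).
  set (s := sqrt (INR K + 4)).
  assert (Hss : s * s = INR K + 4) by (apply sqrt_sqrt; lra).
  assert (Hs : 0 <= s) by apply sqrt_pos.
  assert (Hss0 : s0 <= s).
  { destruct (Rle_or_lt s0 0); [lra|].
    rewrite <- (sqrt_square s0) by lra. apply sqrt_le_1; nra. }
  assert (Hln : ln (INR K + 4) <= 2 * s) by (apply ln_le_two_sqrt; lra).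
  assert (Hln1 : 0 <= ln (INR K + 1) <= ln (INR K + 4)).
  { split; [rewrite <- ln_1|]; apply ln_le; lra. }
  assert (Hy2 : y ^ 2 <= (a * (s * s) + 8 * s + A) ^ 2)
    by (apply pow_incr; unfold A; rewrite Hss; lra).
  assert (HCy : C * y ^ 2 <= C * (a * (s * s) + 8 * s + A) ^ 2) by (apply Rmult_le_compat_l; lra).
  assert (HKln : INR K * ln (INR K + 1) <= (s * s - 4) * (2 * s))
    by (replace (s * s - 4) with (INR K) by lra; apply Rmult_le_compat_l; lra).
  assert (Hgap := Hs0 s Hss0).
  replace (INR K) with (s * s - 4) in HKln |- * by lra.
  lra.
Qed.

Theorem theorem1p1 :
  forall (tau C : R), 0 < C -> C < 1 / ln 4 ->
  exists N0 : nat, forall N : nat, (N0 <= N)%nat ->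
    m_N N tau < exp (- C * (ln (INR N)) ^ 2).
Proof.
  intros tau C HC HC4.
  destruct (INR_unbounded (exp (Rabs tau + 1))) as [Lam HLam].
  assert (HLam1 : (1 <= Lam)%nat).
  { apply INR_le. simpl (INR 1). pose proof (exp_ineq1_le (Rabs tau + 1)).
    pose proof (Rabs_pos tau). lra. }
  destruct (log_gap_eventually C (ln (INR Lam)) HC HC4) as [K1 HK1].
  set (f K := (Lam * (2 ^ K * scale K))%nat).
  assert (Hf : forall K, (f K < f (S K))%nat).
  { intros K. unfold f, scale, rising3. rewrite Nat.pow_succ_r'.
    assert (1 <= 2 ^ K)%nat by (apply Nat.le_succ_l, Nat.neq_0_lt_0, Nat.pow_nonzero; lia). nia. }
  exists (f (S K1)). intros N HN.
  destruct (exists_bracket f Hf (S K1) N HN) as [K [HK [Hlo Hhi]]].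
  assert (HN1 : (1 <= N)%nat) by (destruct K as [|K']; [lia | pose proof (Hf K'); lia]).
  apply Rle_lt_trans with (precision K).
  { apply (m_N_le_precision tau K Lam N); [lia | lra | exact Hlo]. }
  rewrite <- (exp_ln (precision K)) by apply precision_pos.
  apply exp_increasing. eapply Rle_lt_trans; [apply ln_precision_le|].
  apply HK1; [lia|]. split.
  - rewrite <- ln_1. apply ln_le; [lra | apply (le_INR 1), HN1].
  - apply ln_le_of_lt_scale; assumption.
Qed.
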